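(* Consider the Gumbel-max watermark model of the context. If, almost surely, $\mathbf{P}_t\in\mathcal{P}_{\Delta_n}$, and $n$ is large enough that $\Delta_n<0.5$, then almost surely $\mathbb{E}_{Y\sim U(0,1)}\big(\bar f_{1,t}(Y)-1\big)^2\ge c\,\Delta_n$, where $c>0$ is a universal constant.
   Context: $\mathcal{W}$ is a finite vocabulary; $\mathcal{P}_\Delta=\{\mathbf{P}:\max_wP_w\le1-\Delta\}$. For a probability vector $\mathbf{P}$, $f_{1,\mathbf{P}}(r)=\sum_{w:P_w>0}r^{1/P_w-1}$ (density of the CDF $\sum_wP_wr^{1/P_w}$ on $[0,1]$). Watermark model: at step $t$ a random next-token distribution $\mathbf{P}_t$ is produced and a pivotal statistic $Y_t$ is observed (Gumbel-max scheme: $\xi_t=(U_{t,w})_w$ i.i.d. $U(0,1)$, token $w_t$, $Y_t=U_{t,w_t}$). With $\mathcal{G}_{t-1}=\sigma(Y_1,\dots,Y_{t-1})$, define $\bar f_{1,t}(y)=\mathbb{E}_1[f_{1,\mathbf{P}_t}(y)\mid\mathcal{G}_{t-1}]$, where the conditional expectation is over $\mathbf{P}_t$ under the watermark model; in $\mathbb{E}_{Y\sim U(0,1)}$, $\bar f_{1,t}$ is held fixed and only $Y$ is integrated. *)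

From HB Require Import structures.
From mathcomp Require Import all_boot all_order all_algebra.
From mathcomp Require Import all_classical all_reals all_analysis.
Set Implicit Arguments. Unset Strict Implicit. Unset Printing Implicit Defensive.
Import Order.TTheory GRing.Theory Num.Theory.
Local Open Scope ring_scope.
Local Open Scope classical_set_scope.

Section Defs.
Variable R : realType.
Variable W : finType.

Definition is_probvec (P : W -> R) : Prop :=
  (forall w, 0 <= P w) /\ \sum_(w : W) P w = 1.

Definition in_PDelta (Delta : R) (P : W -> R) : Prop :=
  is_probvec P /\ (forall w, P w <= 1 - Delta).

Definition f1 (P : W -> R) (r : R) : R :=
  \sum_(w : W | 0 < P w) r `^ ((P w)^-1 - 1).

(* \bar f_{1,t}(y) = E[f_{1,P_t}(y) | G_{t-1}], written as the integral of
   f_{1,P} against the (conditional) law [mu] of P_t, realized through a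
   measurable map P : T -> (W -> R). *)
Definition fbar d (T : measurableType d) (mu : probability T R)
  (P : T -> W -> R) (y : R) : R :=
  fine (\int[mu]_(t in setT) (f1 (P t) y)%:E)%E.

End Defs.

(* On the window [1 - Delta, 1], a token w with P_w > 0 contributes
   int y^(1/P_w - 1) dy = P_w (1 - (1 - Delta)^(1/P_w)) >= 5/9 min(P_w, Delta)
   to the integral of f_{1,P}, and since max_w P_w <= 1 - Delta these minima
   add up to at least 2 Delta (one large P_w contributes Delta and leaves mass
   at least Delta to the others; otherwise they sum to 1).  So f_{1,P}, hence
   by Tonelli its average fbar, has mean at least 10/9 over a window of length
   Delta, and the pointwise bound (g - 1)^2 >= 2/9 g - 19/81, equivalent to
   (g - 10/9)^2 >= 0, integrates to at least (20/81 - 19/81) Delta. *)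

From HB Require Import structures.
From mathcomp Require Import all_boot all_order all_algebra.
From mathcomp Require Import all_classical all_reals all_analysis.
From mathcomp Require Import ring lra.
From mathcomp Require Import measurable_realfun.
Import Order.TTheory GRing.Theory Num.Theory.
Import numFieldNormedType.Exports.

Set Implicit Arguments.
Unset Strict Implicit.
Unset Printing Implicit Defensive.

Local Open Scope ring_scope.
Local Open Scope classical_set_scope.

Section minr_sum.
Variable R : realDomainType.

Lemma minr_addr_le (D a b : R) : 0 <= D -> 0 <= a -> 0 <= b ->
  Num.min (a + b) D <= Num.min a D + Num.min b D.
Proof.
move=> D0 a0 b0.
by case: (leP (a + b) D); case: (leP a D); case: (leP b D); lra.
Qed.

Lemma minr_sum_le (I : finType) (Q : pred I) (f : I -> R) (D : R) :
  0 <= D -> (forall i, 0 <= f i) ->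
  Num.min (\sum_(i | Q i) f i) D <= \sum_(i | Q i) Num.min (f i) D.
Proof.
move=> D0 f0.
pose K (a b : R) := Num.min a D <= b /\ 0 <= a.
suff [] : K (\sum_(i | Q i) f i) (\sum_(i | Q i) Num.min (f i) D) by [].
apply: (big_rec2 K); first by rewrite /K min_l.
move=> i a b _ [ab a0]; split; last exact: addr_ge0.
by apply: (le_trans (minr_addr_le D0 (f0 i) a0)); rewrite lerD2l.
Qed.

End minr_sum.

Section powR_bounds.
Variable R : realType.
Notation lebesgue := (@lebesgue_measure R).

Lemma integral_itv1_powR (e u : R) : 0 < e -> 0 < u < 1 ->
  (\int[lebesgue]_(y in `[u, 1%R]) (y `^ (e - 1))%:E = ((1 - u `^ e) / e)%:E)%E.
Proof.
move=> e0 /andP[u0 u1].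
have F'E (y : R) : 0 < y ->
    is_derive y 1 (fun z => e^-1 * z `^ e) (e^-1 * (e * y `^ (e - 1))).
  by move=> y0; apply: is_deriveZ; exact: is_derive1_powR.
rewrite (@continuous_FTC2 _ _ (fun z => e^-1 * z `^ e)) //.
- by rewrite powR1 -EFinB -mulrBr mulrC.
- apply: derivable_within_continuous => y; rewrite in_itv/= => /andP[uy _].
  by apply: derivable_powR; rewrite in_itv/= andbT; exact: lt_le_trans uy.
- split.
  + move=> y; rewrite in_itv/= => /andP[uy _].
    by have [] := F'E y (lt_trans u0 uy).
  + apply: cvg_at_right_filter.
    by have [/derivable1_diffP /differentiable_continuous] := F'E u u0.
  + apply: cvg_at_left_filter.
    by have [/derivable1_diffP /differentiable_continuous] := F'E 1 ltr01.
- move=> y; rewrite in_itv/= => /andP[uy _].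
  have := F'E y (lt_trans u0 uy) => F'y.
  by rewrite derive1E derive_val mulrA mulVf ?mul1r // gt_eqF.
Qed.

(* Compare both factors with exponentials: (1 - D)^e <= exp(-eD) and
   (1 + eD/2)^2 <= exp(eD). *)
Lemma powR_mul_sqr_le1 (D e : R) : 0 < D < 1 -> 0 < e ->
  (1 - D) `^ e * (1 + e * D / 2) ^+ 2 <= 1.
Proof.
move=> /andP[D0 D1] e0.
have powE : (1 - D) `^ e = expR (e * ln (1 - D)) by rewrite /powR gt_eqF ?subr_gt0.
have lnD : ln (1 - D) <= - D.
  by have := @le_ln1Dx R (- D); rewrite ltrNl opprK; apply.
have pow_le : expR (e * ln (1 - D)) <= expR (- (e * D)).
  by rewrite ler_expR -mulrN ler_pM2l.
have sqr_le : (1 + e * D / 2) ^+ 2 <= expR (e * D).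
  have -> : expR (e * D) = expR (e * D / 2) ^+ 2.
    by rewrite -expRM_natl; congr expR; field.
  apply: lerXn2r; rewrite ?nnegrE ?expR_ge0 //; last exact: expR_ge1Dx.
  by apply: addr_ge0 => //; apply: divr_ge0 => //; apply: mulr_ge0; exact: ltW.
rewrite powE; apply: (le_trans (ler_wpM2r (sqr_ge0 _) pow_le)).
apply: (le_trans (ler_wpM2l (expR_ge0 _) sqr_le)).
by rewrite -expRD addNr expR0.
Qed.

Lemma minr_le_mul_one_subr_powR (D p : R) : 0 < D < 1 -> 0 < p ->
  5 / 9 * Num.min p D <= p * (1 - (1 - D) `^ p^-1).
Proof.
move=> D01 p0; have := @powR_mul_sqr_le1 D p^-1 D01; rewrite invr_gt0 => /(_ p0).
set V := (1 - D) `^ p^-1 => VE.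
have V0 : 0 <= V by exact: powR_ge0.
case/andP: D01 => D0 D1.
set x := p^-1 * D in VE.
have x0 : 0 < x by rewrite mulr_gt0 ?invr_gt0.
have Dx : D = p * x by rewrite mulrA mulfV ?mul1r // gt_eqF.
have sqr0 : 0 < (1 + x / 2) ^+ 2 by rewrite exprn_gt0 // ltr_wpDr // divr_ge0 // ltW.
case: (leP D p) => Dp.
- rewrite Dx mulrA (mulrC _ p) -mulrA ler_pM2l //.
  have x1 : x <= 1 by rewrite -(ler_pM2l p0) mulr1 -Dx.
  have cubic : 1 <= (1 - 5/9 * x) * (1 + x / 2) ^+ 2.
    rewrite -subr_ge0.
    have -> : (1 - 5/9 * x) * (1 + x / 2) ^+ 2 - 1 = x * (16 - 11 * x - 5 * x ^+ 2) / 36.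
      by rewrite /GRing.exp /=; field.
    apply: divr_ge0 => //; apply: mulr_ge0; first exact: ltW.
    nra.
  have : V * (1 + x / 2) ^+ 2 <= (1 - 5/9 * x) * (1 + x / 2) ^+ 2 by exact: le_trans cubic.
  by rewrite ler_pM2r //; lra.
- rewrite mulrC ler_pM2l //.
  have x1 : 1 < x by rewrite -(ltr_pM2l p0) mulr1 -Dx.
  have sqr_ge : 9/4 <= (1 + x / 2) ^+ 2 by nra.
  have : V * 9/4 <= 1 by rewrite -mulrA; apply: le_trans VE; apply: ler_wpM2l.
  lra.
Qed.

End powR_bounds.

Lemma measurable_inv (R : realType) : measurable_fun [set: R] GRing.inv.
Proof.
have -> : [set: R] = [set x | x != 0] `|` [set 0].
  by apply/seteqP; split => x // _; case: (eqVneq x 0) => [->|x0]; [right|left].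
have open_neq0 : open [set x : R | x != 0] by exact: open_neq.
apply/measurable_funU => //; first exact: open_measurable.
split; last exact: measurable_fun_set1.
apply: open_continuous_measurable_fun => // x; rewrite inE => x0.
exact: inv_continuous.
Qed.

Lemma integral_sqr_subr1_ge d (T : measurableType d) (R : realType)
    (nu : {measure set T -> \bar R}) (A : set T) (g : T -> R) (k : R) :
  measurable A -> measurable_fun A g -> (forall x, A x -> 0 <= g x) -> 1 <= k ->
  ((2 * (k - 1))%:E * \int[nu]_(x in A) (g x)%:E <=
   \int[nu]_(x in A) ((g x - 1) ^+ 2)%:E + (k ^+ 2 - 1)%:E * nu A)%E.
Proof.
move=> mA mg g0 k1.
have mgE : measurable_fun A (fun x => (g x)%:E) by exact/measurable_EFinP.
have k0 : 0 <= 2 * (k - 1) by lra.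
have mg1 : measurable_fun A (fun x => ((g x - 1) ^+ 2)%:E).
  by apply/measurable_EFinP; apply: measurable_funX; apply: measurable_funB.
rewrite -ge0_integralZl_EFin //.
rewrite -integral_cst // -ge0_integralD //; last 2 first.
- by move=> x _; rewrite lee_fin sqr_ge0.
- by move=> x _; rewrite /= lee_fin; nra.
apply: ge0_le_integral => //.
- by move=> x Ax; rewrite -EFinM lee_fin; apply: mulr_ge0; [lra | exact: g0].
- exact: measurable_funeM.
- by apply: emeasurable_funD; last exact: measurable_cst.
- move=> x _; rewrite /= -EFinD -EFinM lee_fin.
  by have := sqr_ge0 (g x - k); rewrite !expr2; lra.
Qed.

Section PDelta.
Variables (R : realType) (W : finType).

Lemma probvec_le1 (P : W -> R) w : is_probvec P -> P w <= 1.
Proof.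
move=> [P0 <-]; rewrite (bigD1 w) //= lerDl.
by apply: sumr_ge0 => v _; exact: P0.
Qed.

Lemma sum_minr_PDelta_ge (P : W -> R) (D : R) : in_PDelta D P -> 0 < D <= 1/2 ->
  2 * D <= \sum_w Num.min (P w) D.
Proof.
move=> [[P0 P1] PD] /andP[D0 D2].
have [[w0 Dw0]|small] := pselect (exists w, D <= P w).
- rewrite (bigD1 w0) //= (min_r Dw0).
  have rest_sum : \sum_(w | w != w0) P w = 1 - P w0.
    by rewrite -P1 [in RHS](bigD1 w0) //= addrC addrK.
  have := minr_sum_le (predC1 w0) (ltW D0) P0; rewrite rest_sum.
  by have := PD w0; case: (leP (1 - P w0) D); lra.
- have -> : \sum_w Num.min (P w) D = \sum_w P w.
    apply: eq_bigr => w _; rewrite min_l // leNgt; apply/negP => Dw.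
    by apply: small; exists w; exact: ltW.
  by rewrite P1; lra.
Qed.

Lemma integral_f1_PDelta_ge (P : W -> R) (D : R) :
  in_PDelta D P -> 0 < D < 1/2 ->
  ((10/9 * D)%:E <= \int[lebesgue_measure]_(y in `[(1 - D)%R, 1%R]) (f1 P y)%:E)%E.
Proof.
move=> PD /andP[D0 D2]; have [[P0 _] _] := PD.
have D01 : 0 < D < 1 by rewrite D0 /=; lra.
have u01 : 0 < 1 - D < 1 by apply/andP; split; lra.
pose g := fun (w : W) (y : R) => if 0 < P w then (y `^ ((P w)^-1 - 1))%:E else 0%E.
have f1E y : (f1 P y)%:E = (\sum_(w : W) g w y)%E.
  by rewrite /f1 -sumEFin big_mkcond /=; apply: eq_bigr => w _; rewrite /g; case: ifP.
have mg : forall w, measurable_fun `[(1 - D)%R, 1%R] (g w).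
  move=> w; rewrite /g; case: (0 < P w); last exact: measurable_cst.
  by apply: measurableT_comp => //; apply: measurable_funTS; exact: measurable_powR.
have g0 w y : `[(1 - D)%R, 1%R] y -> (0 <= g w y)%E.
  by move=> _; rewrite /g; case: ifP => // _; rewrite lee_fin powR_ge0.
under eq_integral do rewrite f1E.
rewrite ge0_integral_sum //.
apply: (@le_trans _ _ (\sum_(w : W) (5/9 * Num.min (P w) D)%:E)%E); last first.
  apply: lee_sum => w _; rewrite /g; have [Pw|Pw] := boolP (0 < P w).
    rewrite integral_itv1_powR ?invr_gt0 // lee_fin invrK.
    by have := minr_le_mul_one_subr_powR D01 Pw; lra.
  have -> : P w = 0 by apply/eqP; rewrite eq_le P0 andbT leNgt.
  by rewrite integral0 lee_fin min_l ?mulr0 // ltW.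
rewrite sumEFin lee_fin -mulr_sumr.
have := sum_minr_PDelta_ge PD; rewrite D0 => /(_ (ltW D2)); lra.
Qed.

End PDelta.

Section fbar_ext.
Variables (R : realType) (W : finType) (d : measure_display) (T : measurableType d).
Variables (mu : probability T R) (P : T -> W -> R).
Hypothesis mP : forall w, measurable_fun setT (fun t => P t w).

(* A jointly measurable version of [(t, y) |-> f1 (P t) y]; it only differs
   from it at [y = 0], where [ln 0 = 0]. *)
Definition f1_uncurry (z : T * R) : R :=
  \sum_(w : W) \1_(`]0%R, +oo[ : set R) (P z.1 w) * expR (((P z.1 w)^-1 - 1) * ln z.2).

Definition fbar_ext (y : R) : \bar R := (\int[mu]_t (f1_uncurry (t, y))%:E)%E.

Lemma f1_uncurry_ge0 z : 0 <= f1_uncurry z.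
Proof. by apply: sumr_ge0 => w _; apply: mulr_ge0 => //; exact: expR_ge0. Qed.

Lemma f1_uncurryE t y : 0 < y -> f1_uncurry (t, y) = f1 (P t) y.
Proof.
move=> y0; rewrite /f1_uncurry /f1 [RHS]big_mkcond /=; apply: eq_bigr => w _.
rewrite indicE; case: ifPn => Pw.
  by rewrite mem_set ?mul1r /=; [rewrite /powR gt_eqF | rewrite in_itv /= andbT].
by rewrite memNset ?mul0r //= in_itv /= andbT; exact/negP.
Qed.

Lemma measurable_f1_uncurry : measurable_fun setT f1_uncurry.
Proof.
have mPz w : measurable_fun setT (fun z : T * R => P z.1 w).
  exact: measurableT_comp (mP w) measurable_fst.
apply: measurable_sum => w; apply: measurable_funM.
  by apply: measurableT_comp (mPz w); exact: measurable_indic.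
apply: measurableT_comp; first exact: measurable_expR.
apply: measurable_funM; last by apply: measurableT_comp; [exact: measurable_ln|].
by apply: measurable_funB => //; apply: measurableT_comp; [exact: measurable_inv|].
Qed.

Let measurable_EFin_f1_uncurry : measurable_fun setT (fun z => (f1_uncurry z)%:E).
Proof. by apply/measurable_EFinP; exact: measurable_f1_uncurry. Qed.

Lemma measurable_fbar_ext : measurable_fun setT fbar_ext.
Proof.
apply: (measurable_fun_fubini_tonelli_G _ measurable_EFin_f1_uncurry).
by move=> z; rewrite lee_fin f1_uncurry_ge0.
Qed.

Lemma fbar_fine_ext y : 0 < y -> fbar mu P y = fine (fbar_ext y).
Proof.
by move=> y0; congr fine; apply: eq_integral => t _; rewrite f1_uncurryE.
Qed.

Lemma fbar_ge0 y : 0 <= fbar mu P y.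
Proof.
apply/fine_ge0/integral_ge0 => t _; rewrite lee_fin.
by apply: sumr_ge0 => w _; exact: powR_ge0.
Qed.

Lemma measurable_fbar : measurable_fun (`]0%R, +oo[ : set R) (fbar mu P).
Proof.
apply: (eq_measurable_fun (fine \o fbar_ext)).
  by move=> y; rewrite inE /= in_itv /= andbT => y0; rewrite fbar_fine_ext.
apply: measurable_funTS; apply: measurableT_comp measurable_fbar_ext.
exact: fine_measurable.
Qed.

Lemma integral_fbar_ext_PDelta_ge (D : R) :
  {ae mu, forall t, in_PDelta D (P t)} -> 0 < D < 1/2 ->
  ((10/9 * D)%:E <= \int[lebesgue_measure]_(y in `[(1 - D)%R, 1%R]) fbar_ext y)%E.
Proof.
move=> PD D01; set A := (`[(1 - D)%R, 1%R] : set R).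
have A_gt0 y : A y -> 0 < y.
  by rewrite /A /= in_itv /= => /andP[Dy _]; apply: lt_le_trans Dy; lra.
have mA : measurable A by exact: measurable_itv.
pose k z := (f1_uncurry z * \1_A z.2)%:E.
have mk : measurable_fun setT k.
  apply/measurable_EFinP; apply: measurable_funM; first exact: measurable_f1_uncurry.
  by apply: measurableT_comp; [exact: measurable_indic mA | exact: measurable_snd].
have k0 z : (0 <= k z)%E by rewrite lee_fin mulr_ge0 ?f1_uncurry_ge0.
have -> : (\int[lebesgue_measure]_(y in A) fbar_ext y =
           \int[lebesgue_measure]_y \int[mu]_t k (t, y))%E.
  rewrite integral_mkcond; apply: eq_integral => y _; rewrite patchE.
  case: ifPn => yA; first by apply: eq_integral => t _; rewrite /k indicE yA mulr1.
  by under eq_integral do rewrite /k indicE (negbTE yA) mulr0; rewrite integral0.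
rewrite -(@fubini_tonelli _ _ _ _ _ mu lebesgue_measure k mk k0).
apply: (@le_trans _ _ (\int[mu]_t (cst (10/9 * D)%:E) t)%E).
  by rewrite integral_cst //= probability_setT mule1.
apply: (ae_ge0_le_integral measurableT).
- by move=> t _; rewrite lee_fin; apply: mulr_ge0 => //; case/andP: D01 => /ltW.
- exact: measurable_cst.
- by move=> t _; apply: integral_ge0.
- exact: (@measurable_fun_fubini_tonelli_F _ _ _ _ _ lebesgue_measure k mk k0).
apply: filterS PD => t Pt _.
have -> : (\int[lebesgue_measure]_y k (t, y) =
           \int[lebesgue_measure]_(y in A) (f1 (P t) y)%:E)%E.
  rewrite [RHS]integral_mkcond; apply: eq_integral => y _; rewrite patchE /k indicE.
  by case: ifPn => yA; rewrite ?mulr1 ?mulr0 // f1_uncurryE //; apply/A_gt0/set_mem.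
exact: integral_f1_PDelta_ge.
Qed.

Lemma f1_uncurry_le_card t y :
  is_probvec (P t) -> 0 < y <= 1 -> f1_uncurry (t, y) <= #|W|%:R.
Proof.
move=> Pt /andP[y0 y1]; rewrite -sumr_const; apply: ler_sum => w _; rewrite indicE.
have [Pw|Pw] := boolP (0 < P t w); last first.
  by rewrite memNset ?mul0r //= in_itv /= andbT; exact/negP.
rewrite mem_set ?mul1r /=; last by rewrite in_itv /= andbT.
have e0 : 0 <= (P t w)^-1 - 1.
  by rewrite subr_ge0 invr_ge1 ?probvec_le1 ?unitfE ?gt_eqF.
by rewrite -[X in _ <= X]expR0 ler_expR mulr_ge0_le0 // ln_le0.
Qed.

(* Finiteness matters because [fbar] is defined through [fine], which sends
   [+oo] to [0]. *)
Lemma fbar_ext_le_card y : {ae mu, forall t, is_probvec (P t)} -> 0 < y <= 1 ->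
  (fbar_ext y <= #|W|%:R%:E)%E.
Proof.
move=> Pprob y01.
apply: (@le_trans _ _ (\int[mu]_t (cst (#|W|%:R : R)%:E) t)%E); last first.
  by rewrite integral_cst //= probability_setT mule1.
apply: (ae_ge0_le_integral measurableT).
- by move=> t _; rewrite lee_fin f1_uncurry_ge0.
- exact: measurableT_comp measurable_EFin_f1_uncurry (pair2_measurable y).
- by move=> t _; rewrite lee_fin.
- exact: measurable_cst.
by apply: filterS Pprob => t Pt _; rewrite lee_fin f1_uncurry_le_card.
Qed.

Lemma fbarE y : {ae mu, forall t, is_probvec (P t)} -> 0 < y <= 1 ->
  (fbar mu P y)%:E = fbar_ext y.
Proof.
move=> Pprob y01; rewrite fbar_fine_ext; last by case/andP: y01.
rewrite fineK // ge0_fin_numE; last first.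
  by apply: integral_ge0 => t _; rewrite lee_fin f1_uncurry_ge0.
exact: le_lt_trans (fbar_ext_le_card Pprob y01) (ltey _).
Qed.

Lemma measurable_sqr_fbar_subr1 :
  measurable_fun (`[0%R, 1%R] : set R) (fun y => ((fbar mu P y - 1) ^+ 2)%:E).
Proof.
apply: (emeasurable_fun_itv_cc (b0 := false) (b1 := false)).
apply/measurable_EFinP; apply: measurable_funX; apply: measurable_funB => //.
apply: (measurable_funS _ _ measurable_fbar) => // y.
by rewrite /= !in_itv /= andbT => /andP[].
Qed.

(* [integral_sqr_subr1_ge] with [k = 10/9], the lower bound on the mean of
   [fbar] over the window: 2/9 * 10/9 - 19/81 = 1/81. *)
Lemma integral_sqr_fbar_subr1_ge (D : R) :
  {ae mu, forall t, in_PDelta D (P t)} -> 0 < D < 1/2 ->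
  ((81^-1 * D)%:E <=
   \int[lebesgue_measure]_(y in `[(1 - D)%R, 1%R]) ((fbar mu P y - 1) ^+ 2)%:E)%E.
Proof.
move=> PD D01; have /andP[D0 _] := D01.
have Pprob : {ae mu, forall t, is_probvec (P t)} by apply: filterS PD => t [].
set A := (`[(1 - D)%R, 1%R] : set R).
have mA : measurable A by exact: measurable_itv.
have A_pos y : A y -> 0 < y <= 1.
  by rewrite /A /= in_itv /= => /andP[Dy ->]; rewrite andbT; lra.
have mfA : measurable_fun A (fbar mu P).
  apply: (measurable_funS _ _ measurable_fbar) => // y /A_pos.
  by rewrite /= in_itv /= => /andP[->].
have lebA : lebesgue_measure A = D%:E.
  by rewrite lebesgue_measure_itv /= lte_fin ltrBlDr ltrDl D0 -EFinD opprB addrC subrK.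
have fbarA : (\int[lebesgue_measure]_(y in A) (fbar mu P y)%:E =
              \int[lebesgue_measure]_(y in A) fbar_ext y)%E.
  by apply: eq_integral => y /set_mem /A_pos; exact: fbarE.
have k1 : 1 <= 10/9 :> R by lra.
have := integral_sqr_subr1_ge lebesgue_measure mA mfA (fun y _ => fbar_ge0 y) k1.
rewrite fbarA [X in (_ <= _ + _ * X)%E](_ : _ = D%:E) //.
rewrite -EFinM (_ : (10 / 9) ^+ 2 - 1 = 19/81 :> R); last by field.
rewrite (_ : 2 * (10 / 9 - 1) = 2/9 :> R); last by field.
have -> : 81^-1 * D = 2/9 * (10/9 * D) - 19/81 * D by field.
rewrite EFinB leeBlDr //; apply: le_trans.
by rewrite EFinM lee_wpmul2l ?lee_fin // integral_fbar_ext_PDelta_ge.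
Qed.

End fbar_ext.

Theorem lemmaA5 :
  exists c : rat, 0 < c /\
  forall (R : realType) (W : finType) (d : measure_display) (T : measurableType d)
         (mu : probability T R)
         (P : T -> W -> R) (Delta : R),
    (forall w : W, measurable_fun setT (fun t => P t w)) ->
    {ae mu, forall t, in_PDelta Delta (P t)} ->
    Delta < 1 / 2 ->
    ((ratr c * Delta)%:E <=
     \int[(@lebesgue_measure R)]_(y in `[0%R, 1%R])
        ((fbar mu P y - 1) ^+ 2)%:E)%E.
Proof.
exists (81%:R)^-1; split => // R W d T mu P Delta mP PD Delta_lt.
rewrite fmorphV rmorph_nat.
have F0 y : (0 <= ((fbar mu P y - 1) ^+ 2)%:E)%E by rewrite lee_fin sqr_ge0.
have [Delta_le0|Delta_gt0] := leP Delta 0.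
  apply: (@le_trans _ _ 0%E); first by rewrite lee_fin mulr_ge0_le0.
  by apply: integral_ge0 => y _; exact: F0.
have Delta01 : 0 < Delta < 1/2 by rewrite Delta_gt0.
apply: (le_trans (integral_sqr_fbar_subr1_ge mP PD Delta01)).
have mF := measurable_sqr_fbar_subr1 mu mP.
apply: ge0_subset_integral => // y.
by rewrite /= !in_itv /= => /andP[Dy ->]; rewrite andbT; lra.
Qed.
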